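(* Let $\varphi(x)=\sum_{i\ge0}\gamma_ix^i\in\mathbb{K}[[x]]$ and let $k\ge1$ be an integer. Then $$\sum_{i=0}^m(-1)^i\binom{2m+2k-1}{m-i}\binom{m+i}{i}\gamma_{m+i-1}=0\quad\text{for each } m\ge1$$ if and only if $\varphi\in\mathcal{F}_{2k+1}$.
   Context: $\mathbb{K}\in\{\mathbb{Q},\mathbb{R},\mathbb{C}\}$. For $r\in\mathbb{Z}$, $\mathcal{F}_r$ denotes the space of $\varphi\in\mathbb{K}[[x]]$ with $\varphi(x/(x-1))=(1-x)^r\varphi(x)$. *)

From HB Require Import structures.
From mathcomp Require Import all_boot all_order all_algebra.
Set Implicit Arguments. Unset Strict Implicit. Unset Printing Implicit Defensive.
Import Order.TTheory GRing.Theory Num.Theory.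
Local Open Scope ring_scope.

Definition fps (K : numFieldType) := nat -> K.

Section FPS.
Variable K : numFieldType.

Definition fps_one : fps K := fun n => (n == 0%N)%:R.
Definition fps_x : fps K := fun n => (n == 1%N)%:R.
Definition fps_1mx : fps K := fun n => fps_one n - fps_x n.
(* 1/(1-x) = 1 + x + x^2 + ... *)
Definition fps_geom : fps K := fun _ => 1.
Definition fps_mul (f g : fps K) : fps K :=
  fun n => \sum_(i < n.+1) f i * g (n - i)%N.
Definition fps_pow (f : fps K) (i : nat) : fps K := iter i (fps_mul f) fps_one.
(* composition phi(psi) (meaningful when psi 0 = 0, since then psi^i has
   order >= i, so only i <= n contribute to the n-th coefficient) *)
Definition fps_comp (phi psi : fps K) : fps K :=
  fun n => \sum_(i < n.+1) phi i * fps_pow psi i n.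
(* x/(x-1) = -x/(1-x) = - (x + x^2 + x^3 + ...) *)
Definition fps_xdiv : fps K := fun n => if n == 0%N then 0 else -1.
Definition fps_1mx_powz (r : int) : fps K :=
  if (0 <= r)%R then fps_pow fps_1mx `|r|%N else fps_pow fps_geom `|r|%N.

(* phi \in F_r  :<=>  phi(x/(x-1)) = (1-x)^r phi(x) *)
Definition inF (r : int) (phi : fps K) : Prop :=
  forall n, fps_comp phi fps_xdiv n = fps_mul (fps_1mx_powz r) phi n.
End FPS.

(* Both conditions cut out linear subspaces of K[[x]] which are closed under
   coefficientwise limits, contain phi_e = 2^(2k+1) x^e / (2 - x)^(2k+1+e) for every
   even e, and in which an odd coefficient vanishes as soon as all lower ones do.
   Since phi_e starts with a nonzero multiple of x^e, a series of the first
   subspace agrees on its even coefficients below any bound with a combination of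
   the phi_e; the difference then vanishes below that bound, so the series lies in
   the second subspace too.
   phi_e satisfies the functional equation since x/(x-1) turns 2 - x into
   (x-2)/(x-1) and e is even.  By trinomial revision, the m-th linear condition on
   phi_e is a multiple of the middle coefficient of (1+x)^a (1-x)^b with a + b = 2m
   and b odd, which vanishes because x^(2m) P(1/x) = -P(x) for that polynomial. *)

From HB Require Import structures.
From mathcomp Require Import all_boot all_order all_algebra.
From mathcomp Require Import zify ring.
Import Order.TTheory GRing.Theory Num.Theory.
Local Open Scope ring_scope.

Section EvenSpan.
Context {F : fieldType}.
Implicit Types (f g h : nat -> F) (P : (nat -> F) -> Prop).

Definition odd_determined P :=
  forall f o, P f -> odd o -> (forall j, (j < o)%N -> f j = 0) -> f o = 0.

Definition limit_closed P :=
  forall g, (forall N, exists2 h, P h & forall j, (j < N)%N -> h j = g j) -> P g.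

Record even_spanned (b : nat -> nat -> F) P : Prop := EvenSpanned {
  even_spanned_lin : forall f g c, P f -> P g -> P (fun j => f j + c * g j);
  even_spanned_basis : forall e, ~~ odd e -> P (b e);
  even_spanned_odd : odd_determined P;
  even_spanned_closed : limit_closed P }.

Context {b : nat -> nat -> F}.
Hypothesis b_lt : forall e j, (j < e)%N -> b e j = 0.
Hypothesis b_diag : forall e, b e e != 0.

Lemma even_spanned_sub {P1 P2} : even_spanned b P1 -> even_spanned b P2 ->
  forall g, P1 g -> P2 g.
Proof.
move=> [lin1 b1 odd1 _] [lin2 b2 _ closed2] g P1g.
have approx M : exists h, [/\ P1 h, P2 h & forall j, (j < M)%N -> ~~ odd j -> h j = g j].
  elim: M => [|M [h [P1h P2h hg]]]; first by exists (b 0); split; [exact: b1|exact: b2|].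
  have [oM | eM] := boolP (odd M).
    exists h; split=> // j; rewrite ltnS leq_eqVlt => /orP[/eqP-> | ]; last exact: hg.
    by rewrite oM.
  pose c := (g M - h M) / b M M.
  exists (fun j => h j + c * b M j); split; [exact: lin1 (b1 _ eM) | exact: lin2 (b2 _ eM) |].
  move=> j; rewrite ltnS leq_eqVlt => /orP[/eqP-> _ | ltjM oj].
    by rewrite /c divfK // addrC subrK.
  by rewrite b_lt // mulr0 addr0 hg.
apply: closed2 => N; have [h [P1h P2h hg]] := approx N; exists h => //.
have P1d : P1 (fun j => g j + (-1) * h j) by exact: lin1.
suff d0 j : (j < N)%N -> g j + (-1) * h j = 0.
  by move=> j /d0 /eqP; rewrite mulN1r subr_eq0 => /eqP.
elim/ltn_ind: j => j IH ltjN; have [oj | ej] := boolP (odd j).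
  by apply: (odd1 _ j P1d oj) => i ltij; apply: IH (ltn_trans ltij ltjN).
by rewrite hg // mulN1r subrr.
Qed.

Lemma even_spanned_eq {P1 P2} : even_spanned b P1 -> even_spanned b P2 ->
  forall g, P1 g <-> P2 g.
Proof. by move=> h1 h2 g; split; apply: even_spanned_sub. Qed.

End EvenSpan.

Section CongruenceModXn.
Context {R : comNzRingType}.
Implicit Types p q : {poly R}.

Definition eqmodX N p q := forall j, (j < N)%N -> p`_j = q`_j.

Lemma eqmodX_refl {N p} : eqmodX N p p. Proof. by []. Qed.

Lemma eqmodX_eq {N p q} : p = q -> eqmodX N p q. Proof. by move->. Qed.

Lemma eqmodX_sym {N p q} : eqmodX N p q -> eqmodX N q p.
Proof. by move=> hpq j ltjN; rewrite hpq. Qed.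

Lemma eqmodX_trans {N p q r} : eqmodX N p q -> eqmodX N q r -> eqmodX N p r.
Proof. by move=> hpq hqr j ltjN; rewrite hpq ?hqr. Qed.

Lemma eqmodXB {N p q p' q'} : eqmodX N p p' -> eqmodX N q q' -> eqmodX N (p - q) (p' - q').
Proof. by move=> hp hq j ltjN; rewrite !coefB hp ?hq. Qed.

Lemma eqmodXM {N p q p' q'} : eqmodX N p p' -> eqmodX N q q' -> eqmodX N (p * q) (p' * q').
Proof.
move=> hp hq n ltnN; rewrite !coefM; apply: eq_bigr => -[i lein] _ /=.
by rewrite hp ?hq ?(leq_ltn_trans (leq_subr _ _) ltnN) ?(leq_ltn_trans _ ltnN) // -ltnS.
Qed.

Lemma eqmodXX {N p p'} i : eqmodX N p p' -> eqmodX N (p ^+ i) (p' ^+ i).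
Proof.
by move=> hp; elim: i => [|i IH]; rewrite ?exprS; [exact: eqmodX_refl | exact: eqmodXM].
Qed.

Lemma coef_exp_small q i n : q`_0 = 0 -> (n < i)%N -> (q ^+ i)`_n = 0.
Proof.
move=> q0; elim: i n => [//|i IH] n ltni; rewrite exprS coefM.
apply: big1 => -[[|j] ltjn] _ /=; first by rewrite q0 mul0r.
by rewrite IH ?mulr0 //; lia.
Qed.

Lemma coef_exp_diag q i : q`_0 = 0 -> (q ^+ i)`_i = q`_1 ^+ i.
Proof.
move=> q0; elim: i => [|i IH]; first by rewrite !expr0 coef1.
rewrite exprS coefM big_ord_recl q0 mul0r add0r big_ord_recl /= subSS subn0 IH.
rewrite big1 ?addr0 -?exprS // => -[j ltji] _ /=.
by rewrite coef_exp_small ?mulr0 // /bump /=; lia.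
Qed.

Lemma coef_comp_poly0 p q n : q`_0 = 0 ->
  (p \Po q)`_n = \sum_(i < n.+1) p`_i * (q ^+ i)`_n.
Proof.
move=> q0; rewrite coef_comp_poly.
pose F i := p`_i * (q ^+ i)`_n.
rewrite (big_ord_widen (size p + n.+1) F (leq_addr _ _)).
rewrite [RHS](big_ord_widen (size p + n.+1) F (leq_addl _ _)).
rewrite [LHS]big_mkcond [RHS]big_mkcond /=.
apply: eq_bigr => i _; rewrite /F.
case: (ltnP i (size p)) => hp; case: (ltnP i n.+1) => hn //.
  by rewrite coef_exp_small ?mulr0.
by rewrite nth_default ?mul0r.
Qed.

Lemma eqmodX_comp {N p q p' q'} : q`_0 = 0 -> q'`_0 = 0 ->
  eqmodX N p p' -> eqmodX N q q' -> eqmodX N (p \Po q) (p' \Po q').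
Proof.
move=> q0 q'0 hp hq n ltnN; rewrite !coef_comp_poly0 //.
apply: eq_bigr => -[i ltin] _ /=; have ltiN := leq_trans ltin ltnN.
by rewrite hp // (eqmodXX i hq).
Qed.

End CongruenceModXn.

Lemma eqmodX_mul2l {R : idomainType} {N} {c p q : {poly R}} : c`_0 != 0 ->
  eqmodX N (c * p) (c * q) -> eqmodX N p q.
Proof.
move=> c0 hcpq; suff d0 j : (j < N)%N -> (p - q)`_j = 0.
  by move=> j /d0 /eqP; rewrite coefB subr_eq0 => /eqP.
elim/ltn_ind: j => n IH ltnN; move: (hcpq n ltnN) => /eqP.
rewrite -subr_eq0 -coefB -mulrBr coefM big_ord_recl subn0 big1 ?addr0.
  by rewrite mulf_eq0 (negbTE c0) => /eqP.
by move=> -[j ltjn] _ /=; rewrite IH ?mulr0 // /bump /=; lia.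
Qed.

Lemma hockey_stick s n : (\sum_(i < n.+1) 'C(i + s - 1, i) = 'C(n + s, n))%N.
Proof.
elim: n => [|n IH]; first by rewrite big_ord1 !bin0.
rewrite big_ord_recr /= IH (_ : n.+1 + s - 1 = n + s)%N; last by lia.
by rewrite addSn binS addnC.
Qed.

Lemma bin_trinomial a x y : (y <= x)%N -> (x <= a)%N ->
  ('C(a, x) * 'C(x, y) = 'C(a, y) * 'C(a - y, x - y))%N.
Proof.
move=> leyx lexa; have leya := leq_trans leyx lexa.
have facts_gt0 : (0 < y`! * (x - y)`! * (a - x)`!)%N by rewrite !muln_gt0 !fact_gt0.
apply/eqP; rewrite -(eqn_pmul2r facts_gt0); apply/eqP; transitivity a`!.
  by rewrite -(bin_fact lexa) -(bin_fact leyx); ring.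
have -> : (a - x = (a - y) - (x - y))%N by lia.
by rewrite -(bin_fact leya) -(bin_fact (leq_sub2r y lexa)); ring.
Qed.

Lemma two_neq0 {K : numFieldType} : (2 : K) != 0.
Proof. by rewrite pnatr_eq0. Qed.

Section BinomialSums.
Context {K : numFieldType}.

Lemma coef_1pX_exp n m : (('X + 1) ^+ n : {poly K})`_m = 'C(n, m)%:R.
Proof.
rewrite exprD1n coef_sum.
under eq_bigr do rewrite coefMn coefXn.
transitivity (\sum_(i < n.+1 | i == m :> nat) ('C(n, i)%:R : K)).
  rewrite [RHS]big_mkcond /=; apply: eq_bigr => i _; rewrite eq_sym.
  by case: eqP => _; rewrite ?mul0rn.
rewrite (big_ord1_eq _ (fun i => ('C(n, i)%:R : K))).
by case: ltnP => // ltnm; rewrite bin_small.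
Qed.

Lemma coef_signM j (p : {poly K}) n : ((-1) ^+ j * p)`_n = (-1) ^+ j * p`_n.
Proof.
rewrite -signr_odd -[in RHS]signr_odd.
by case: (odd j); rewrite ?expr1 ?mulN1r ?coefN ?expr0 ?mul1r.
Qed.

Lemma coef_monomials i j c1 c2 m :
  ('X ^+ i *+ c1 * ((- 'X) ^+ j *+ c2) : {poly K})`_m =
  if (i + j == m)%N then (c1 * c2)%:R * (-1) ^+ j else 0.
Proof.
rewrite mulrnAl mulrnAr !coefMn (exprNn ('X : {poly K})) mulrCA -exprD coef_signM coefXn eq_sym.
by case: eqP => _; rewrite ?mulr0 ?mul0rn // mulr1 -mulrnA mulr_natl mulnC.
Qed.

Lemma coef_mid_1pX_1mX a b m : (a + b = 2 * m)%N -> odd b ->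
  (('X + 1) ^+ a * (1 - 'X) ^+ b : {poly K})`_m = 0.
Proof.
move=> abm ob; rewrite (addrC 1 (- 'X)) !exprD1n big_distrlr /= coef_sum.
under eq_bigr do rewrite coef_sum.
under eq_bigr do under eq_bigr do rewrite coef_monomials.
set S := \sum_(i < a.+1) _.
suff : S = - S by move/eqP; rewrite -subr_eq0 opprK -mulr2n mulrn_eq0 => /eqP.
(* the reflection (i, j) |-> (a - i, b - j) of the double sum changes its sign *)
rewrite {1}/S (reindex_inj rev_ord_inj) /= -sumrN; apply: eq_bigr => -[i lti] _ /=.
rewrite (reindex_inj rev_ord_inj) /= -sumrN; apply: eq_bigr => -[j ltj] _ /=.
rewrite !subSS (_ : (a - i + (b - j) == m) = (i + j == m))%N; last by apply/eqP/eqP; lia.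
case: eqP => _; last by rewrite oppr0.
rewrite !bin_sub // -signr_odd oddB // ob -[in RHS]signr_odd.
by case: (odd j); rewrite ?expr0 ?expr1 ?mulrN1 ?mulr1 ?opprK.
Qed.

Lemma sum_alt_bin_half a b m :
  \sum_(l < b.+1) (-1) ^+ l * 'C(b, l)%:R * 'C(l + a, m)%:R / (2 : K) ^+ l =
  2^-1 ^+ b * (('X + 1) ^+ a * (1 - 'X) ^+ b)`_m.
Proof.
have -> : (2^-1 : K) ^+ b * (('X + 1) ^+ a * (1 - 'X) ^+ b)`_m =
          (('X + 1) ^+ a * (- (2^-1)%:P * ('X + 1) + 1) ^+ b)`_m.
  have half_1mX : - (2^-1)%:P * ('X + 1) + 1 = (2^-1)%:P * (1 - 'X) :> {poly K}.
    by apply/polyP => i; rewrite mulNr !(coefD, coefN, coefB, coefCM, coefX, coef1); field.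
  by rewrite -coefCM half_1mX exprMn rmorphXn mulrCA.
rewrite exprD1n mulr_sumr coef_sum; apply: eq_bigr => l _.
rewrite exprMn -polyCN -(rmorphXn polyC) /= [in RHS]mulrnAr [in RHS]mulrCA -exprD.
rewrite coefMn coefCM coef_1pX_exp addnC (exprNn (2^-1 : K)) exprVn -(mulr_natr _ 'C(b, l)).
by field; rewrite expf_neq0 ?two_neq0.
Qed.

End BinomialSums.

Section Truncation.
Context {K : numFieldType}.
Implicit Types f g : fps K.

Definition fps_trunc N f : {poly K} := \poly_(i < N) f i.

Lemma coef_fps_trunc N f j : (j < N)%N -> (fps_trunc N f)`_j = f j.
Proof. by move=> ltjN; rewrite coef_poly ltjN. Qed.

Lemma fps_trunc_mul {N} f g :
  eqmodX N (fps_trunc N (fps_mul f g)) (fps_trunc N f * fps_trunc N g).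
Proof.
move=> n ltnN; rewrite coef_fps_trunc // coefM; apply: eq_bigr => -[i lein] _ /=.
by rewrite !coef_fps_trunc ?(leq_ltn_trans (leq_subr _ _) ltnN) ?(leq_ltn_trans _ ltnN).
Qed.

Lemma fps_trunc_pow {N} f i : eqmodX N (fps_trunc N (fps_pow f i)) (fps_trunc N f ^+ i).
Proof.
elim: i => [|i IH]; first by move=> n ltnN; rewrite coef_fps_trunc // coef1.
rewrite exprS; change (fps_pow f i.+1) with (fps_mul f (fps_pow f i)).
exact: eqmodX_trans (fps_trunc_mul f (fps_pow f i)) (eqmodXM eqmodX_refl IH).
Qed.

Lemma fps_trunc_comp {N} f g : g 0%N = 0 ->
  eqmodX N (fps_trunc N (fps_comp f g)) (fps_trunc N f \Po fps_trunc N g).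
Proof.
move=> g0 n ltnN; rewrite coef_fps_trunc // coef_comp_poly0; last first.
  by rewrite /fps_trunc coef_poly g0 if_same.
apply: eq_bigr => -[i lein] _ /=; have ltiN := leq_trans lein ltnN.
by rewrite coef_fps_trunc // -(fps_trunc_pow g i n ltnN) coef_fps_trunc.
Qed.

Lemma fps_pow0 (f : fps K) i : fps_pow f i 0%N = f 0%N ^+ i.
Proof.
elim: i => [|i IH]; first by rewrite expr0.
by rewrite /fps_pow iterS -/(fps_pow f i) /fps_mul big_ord1 subn0 IH exprS.
Qed.

Lemma fps_xdiv_pow_diag o : fps_pow (fps_xdiv K) o o = (-1) ^+ o.
Proof.
case: o => [|o]; first by [].
by rewrite -(coef_fps_trunc _ _ _ (ltnSn o.+1)) fps_trunc_pow // coef_exp_diag coef_fps_trunc.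
Qed.

Lemma inF_of_trunc (r : nat) (phi : fps K) :
  (forall N, eqmodX N (fps_trunc N phi \Po fps_trunc N (fps_xdiv K))
                      ((1 - 'X) ^+ r * fps_trunc N phi)) ->
  inF r phi.
Proof.
move=> h n; have ltnS1 : (n < n.+1)%N by [].
rewrite -[LHS](coef_fps_trunc _ _ _ ltnS1) -[RHS](coef_fps_trunc _ _ _ ltnS1).
rewrite fps_trunc_comp // h // fps_trunc_mul //.
suff h1mx N : eqmodX N ((1 - 'X) ^+ r) (fps_trunc N (fps_1mx_powz K r)).
  exact: eqmodXM (h1mx _) eqmodX_refl _ ltnS1.
apply: eqmodX_sym (eqmodX_trans (fps_trunc_pow _ _) (eqmodXX _ _)) => j ltjN.
by rewrite coef_fps_trunc // coefB coef1 coefX.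
Qed.

End Truncation.

Section Basis.
Context {K : numFieldType}.
Variable k : nat.

Definition inv_2mx : fps K := fun n => (2 ^+ n.+1)^-1.

Lemma mul_2mx_inv N : eqmodX N ((2 - 'X) * fps_trunc N inv_2mx) 1.
Proof.
move=> j ltjN; rewrite mulrBl coefB mulr_natl coefMn coefXM coef1 coef_fps_trunc //.
case: j ltjN => [|j] ltjN /=; rewrite /inv_2mx.
  by rewrite subr0; field.
by rewrite coef_fps_trunc 1?ltnW // exprS; field; rewrite expf_neq0 ?two_neq0.
Qed.

Lemma coef_inv_2mx_exp N s n : (n < N)%N ->
  (fps_trunc N inv_2mx ^+ s)`_n = 'C(n + s - 1, n)%:R / 2 ^+ (n + s).
Proof.
elim: s n => [|s IH] n ltnN.
  rewrite expr0 coef1 addn0; case: n ltnN => [|n] _; first by rewrite expr0 invr1 mulr1.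
  by rewrite bin_small ?mul0r //; lia.
rewrite exprSr coefM.
transitivity (\sum_(j < n.+1) 'C(j + s - 1, j)%:R / (2 : K) ^+ (n + s.+1)).
  apply: eq_bigr => -[j ltjn] _ /=.
  rewrite IH ?coef_fps_trunc; [|lia|lia].
  by rewrite -mulrA -invfM -exprD (_ : j + s + (n - j).+1 = n + s.+1)%N //; lia.
by rewrite -mulr_suml -natr_sum hockey_stick; congr (_%:R / _); congr 'C(_, _); lia.
Qed.

(* [phi e] is 2^(2k+1) x^e / (2 - x)^(2k+1+e). *)
Definition phi e : fps K :=
  fun j => if (e <= j)%N then 'C(j + 2 * k, j - e)%:R / 2 ^+ j else 0.

Lemma phi_lt e j : (j < e)%N -> phi e j = 0.
Proof. by move=> ltje; rewrite /phi leqNgt ltje. Qed.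

Lemma phi_diag e : phi e e != 0.
Proof. by rewrite /phi leqnn subnn bin0 mul1r invr_eq0 expf_neq0 ?two_neq0. Qed.

Lemma mul_2mx_phi N e : eqmodX N ((2 - 'X) ^+ (2 * k + 1 + e) * fps_trunc N (phi e))
                                  ((2 ^+ (2 * k + 1))%:P * 'X^e).
Proof.
set s := (2 * k + 1 + e)%N; set c : K := 2 ^+ (2 * k + 1).
have Phi : eqmodX N (fps_trunc N (phi e)) (c%:P * 'X^e * fps_trunc N inv_2mx ^+ s).
  move=> j ltjN; rewrite coef_fps_trunc // -mulrA coefCM coefXnM /phi.
  case: leqP => leej; last by rewrite mulr0.
  rewrite coef_inv_2mx_exp; last by lia.
  rewrite /s /c; have -> : (j - e + (2 * k + 1 + e) - 1 = j + 2 * k)%N by lia.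
  have -> : (j - e + (2 * k + 1 + e) = j + (2 * k + 1))%N by lia.
  by rewrite [2 ^+ (j + _)]exprD; field; rewrite !expf_neq0 ?two_neq0.
apply: eqmodX_trans (eqmodXM eqmodX_refl Phi) _.
rewrite mulrCA -exprMn.
apply: eqmodX_trans (eqmodXM eqmodX_refl (eqmodXX s (mul_2mx_inv N))) (eqmodX_eq _).
by rewrite expr1n mulr1.
Qed.

Lemma mul_1mx_xdiv N : eqmodX N ((1 - 'X) * fps_trunc N (fps_xdiv K)) (- 'X).
Proof.
move=> j ltjN; rewrite mulrBl mul1r coefB coefXM coefN coefX coef_fps_trunc //.
case: j ltjN => [|[|j]] ltjN /=; first by rewrite subr0 oppr0.
  by rewrite coef_fps_trunc ?subr0 //; lia.
by rewrite coef_fps_trunc ?subrr ?oppr0 //; lia.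
Qed.

Lemma mul_2mx_comp_phi N e : ~~ odd e ->
  eqmodX N ((2 - 'X) ^+ (2 * k + 1 + e) * (fps_trunc N (phi e) \Po fps_trunc N (fps_xdiv K)))
           ((2 ^+ (2 * k + 1))%:P * ((1 - 'X) ^+ (2 * k + 1) * 'X^e)).
Proof.
move=> ev; set r := (2 * k + 1)%N; set s := (r + e)%N; set Psi := fps_trunc N (fps_xdiv K).
have Psi0 : Psi`_0 = 0 by rewrite /Psi /fps_trunc coef_poly if_same.
have T : eqmodX N ((1 - 'X) * ((2 - 'X) \Po Psi)) (2 - 'X).
  rewrite comp_polyB comp_polyX rmorph_nat mulrBr.
  apply: eqmodX_trans (eqmodXB eqmodX_refl (mul_1mx_xdiv N)) (eqmodX_eq _); ring.
apply: eqmodX_trans (eqmodXM (eqmodX_sym (eqmodXX s T)) eqmodX_refl) _.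
rewrite exprMn -mulrA -rmorphXn -rmorphM /=.
apply: eqmodX_trans (eqmodXM eqmodX_refl (eqmodX_comp Psi0 Psi0 (mul_2mx_phi N e) eqmodX_refl)) _.
rewrite rmorphM /= comp_polyC comp_Xn_poly.
have -> : (1 - 'X) ^+ s * ((2 ^+ r)%:P * Psi ^+ e) =
          (2 ^+ r)%:P * (1 - 'X) ^+ r * ((1 - 'X) * Psi) ^+ e.
  by rewrite exprMn /s exprD; ring.
apply: eqmodX_trans (eqmodXM eqmodX_refl (eqmodXX e (mul_1mx_xdiv N))) (eqmodX_eq _).
by rewrite exprNn -signr_odd (negbTE ev) expr0 mul1r mulrA.
Qed.

Lemma phi_inF e : ~~ odd e -> inF (2 * k + 1)%:Z (phi e).
Proof.
move=> ev; apply: inF_of_trunc => N.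
have T0 : ((2 - 'X) ^+ (2 * k + 1 + e) : {poly K})`_0 != 0.
  by rewrite -horner_coef0 horner_exp !hornerE subr0 expf_neq0 ?two_neq0.
apply: (eqmodX_mul2l T0); apply: eqmodX_trans (mul_2mx_comp_phi N e ev) _.
apply: eqmodX_sym; rewrite mulrCA [X in eqmodX _ _ X]mulrCA.
exact: eqmodXM eqmodX_refl (mul_2mx_phi N e).
Qed.

End Basis.

Section FunctionalEquation.
Context {K : numFieldType}.
Variable r : int.

Lemma fps_1mx_powz0 : fps_1mx_powz K r 0%N = 1.
Proof.
rewrite /fps_1mx_powz; case: ifP => _;
  by rewrite fps_pow0 /fps_1mx /fps_one /fps_x /= ?subr0 expr1n.
Qed.

Lemma inF_odd_determined : odd_determined (@inF K r).
Proof.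
move=> d o hd oo d_lt; move: (hd o); rewrite /fps_comp /fps_mul.
rewrite big_ord_recr big1 ?add0r /=; last by move=> -[i lti] _ /=; rewrite d_lt ?mul0r.
rewrite big_ord_recl big1 ?addr0 /=; last first.
  by move=> -[i lti] _ /=; rewrite d_lt ?mulr0 // /bump /=; lia.
rewrite fps_xdiv_pow_diag -signr_odd oo subn0 fps_1mx_powz0 mulrN1 mul1r sub0r => opp_d.
have : d o *+ 2 == 0 by rewrite mulr2n -{1}opp_d addNr.
by rewrite mulrn_eq0 => /eqP.
Qed.

Lemma inF_limit_closed : limit_closed (@inF K r).
Proof.
move=> g approx n; have [h Fh hg] := approx n.+1.
transitivity (fps_comp h (fps_xdiv K) n).
  by apply: eq_bigr => -[i lti] _ /=; rewrite hg.
by rewrite Fh; apply: eq_bigr => -[i lti] _ /=; rewrite hg // ltnS leq_subr.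
Qed.

Lemma inF_lin (f g : fps K) c : inF r f -> inF r g -> inF r (fun j => f j + c * g j).
Proof.
move=> hf hg n; transitivity (fps_comp f (fps_xdiv K) n + c * fps_comp g (fps_xdiv K) n).
  by rewrite /fps_comp mulr_sumr -big_split; apply: eq_bigr => i _ /=; ring.
by rewrite hf hg /fps_mul mulr_sumr -big_split; apply: eq_bigr => i _ /=; ring.
Qed.

End FunctionalEquation.

Lemma inF_even_spanned {K : numFieldType} k : even_spanned (phi k) (@inF K (2 * k + 1)%:Z).
Proof.
split; [exact: inF_lin | exact: phi_inF | exact: inF_odd_determined | exact: inF_limit_closed].
Qed.

Section LinearConditions.
Context {K : numFieldType}.
Variable k : nat.

Definition Lm m (g : fps K) : K :=
  \sum_(i < m.+1) (-1) ^+ i * 'C(2 * m + 2 * k - 1, m - i)%:R * 'C(m + i, i)%:R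
                  * g (m + i - 1)%N.

Definition Lcond (g : fps K) : Prop := forall m, (1 <= m)%N -> Lm m g = 0.

Definition Lterm m (g : fps K) j : K :=
  (-1) ^+ (j.+1 - m) * 'C(2 * m + 2 * k - 1, 2 * m - 1 - j)%:R * 'C(j.+1, m)%:R * g j.

Lemma Lm_shift m g : (1 <= m)%N -> Lm m g = \sum_(j < 2 * m) Lterm m g j.
Proof.
move=> m_gt0; rewrite -(big_mkord xpredT) (big_cat_nat (n := (m - 1)%N)) /=; [|lia|lia].
rewrite big_nat_cond big1 ?add0r; last first.
  by move=> j /andP[/andP[_ ltj] _]; rewrite /Lterm (@bin_small j.+1 m) ?mulr0 ?mul0r //; lia.
rewrite -{1}(add0n (m - 1)%N) big_addn (_ : 2 * m - (m - 1) = m.+1)%N; last by lia.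
rewrite big_mkord; apply: eq_bigr => -[i lti] _ /=; rewrite /Lterm.
have -> : ((i + (m - 1)).+1 - m = i)%N by lia.
have -> : (2 * m - 1 - (i + (m - 1)) = m - i)%N by lia.
have -> : ((i + (m - 1)).+1 = m + i)%N by lia.
by rewrite (_ : i + (m - 1) = m + i - 1)%N -?(bin_sub (leq_addl m i)) ?addnK //; lia.
Qed.

Lemma Lterm_phi m e l : ~~ odd e -> (l + e < 2 * m)%N ->
  Lterm m (phi k e) (l + e) =
  (-1) ^+ m.+1 * 'C(2 * m + 2 * k - 1, e + 2 * k)%:R / 2 ^+ e *
  ((-1) ^+ l * 'C(2 * m - 1 - e, l)%:R * 'C(l + e.+1, m)%:R / 2 ^+ l).
Proof.
move=> ev lt2m; rewrite /Lterm /phi leq_addl addnK -addnS.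
set n := (2 * m + 2 * k - 1)%N.
have bins : ('C(n, 2 * m - 1 - (l + e)) * 'C(l + e + 2 * k, l)
            = 'C(n, e + 2 * k) * 'C(2 * m - 1 - e, l))%N.
  rewrite (_ : 2 * m - 1 - (l + e) = n - (l + e + 2 * k))%N ?bin_sub; [|lia|lia].
  rewrite -[X in 'C(l + e + 2 * k, X)](_ : l + e + 2 * k - (e + 2 * k) = l)%N; last by lia.
  rewrite bin_sub ?bin_trinomial; [|lia|lia|lia].
  by congr (_ * 'C(_, _))%N; lia.
case: (ltnP (l + e.+1) m) => [ltm | lem]; first by rewrite (bin_small ltm) !(mulr0n, mulr0, mul0r).
have -> : (-1) ^+ (l + e.+1 - m) = (-1) ^+ m.+1 * (-1) ^+ l :> K.
  rewrite -signr_odd -[(-1) ^+ m.+1]signr_odd -[(-1) ^+ l]signr_odd -signr_addb.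
  by rewrite oddB // oddD !oddS (negbTE ev); case: (odd l); case: (odd m).
move/(congr1 (fun x => x%:R : K)): bins; rewrite !natrM => bins.
set C := 'C(l + e.+1, m)%:R; rewrite exprD.
transitivity ((-1) ^+ m.+1 * (-1) ^+ l * C / (2 ^+ l * 2 ^+ e) *
              ('C(n, 2 * m - 1 - (l + e))%:R * 'C(l + e + 2 * k, l)%:R)).
  by field; rewrite !expf_neq0 ?two_neq0.
by rewrite bins; field; rewrite !expf_neq0 ?two_neq0.
Qed.

Lemma Lm_phi m e : ~~ odd e -> (1 <= m)%N -> Lm m (phi k e) = 0.
Proof.
move=> ev m_gt0; rewrite Lm_shift //.
have [le2m | lt2m] := leqP (2 * m) e.
  by apply: big1 => -[j ltj] _ /=; rewrite /Lterm phi_lt ?mulr0 //; lia.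
set b := (2 * m - 1 - e)%N.
rewrite -(big_mkord xpredT) (big_cat_nat (n := e)) /=; [|lia|lia].
rewrite big_nat_cond big1 ?add0r; last first.
  by move=> j /andP[/andP[_ ltje] _]; rewrite /Lterm phi_lt ?mulr0.
rewrite -{1}(add0n e) big_addn (_ : 2 * m - e = b.+1)%N; last by lia.
pose c : K := (-1) ^+ m.+1 * 'C(2 * m + 2 * k - 1, e + 2 * k)%:R / 2 ^+ e.
transitivity (\sum_(l < b.+1) c * ((-1) ^+ l * 'C(b, l)%:R * 'C(l + e.+1, m)%:R / 2 ^+ l)).
  by rewrite big_mkord; apply: eq_bigr => -[l ltl] _ /=; rewrite Lterm_phi //; lia.
rewrite -mulr_sumr sum_alt_bin_half coef_mid_1pX_1mX ?mulr0 //; first by lia.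
by rewrite /b !oddB ?odd_double ?(negbTE ev) //; lia.
Qed.

Lemma Lcond_odd_determined : odd_determined Lcond.
Proof.
move=> d o hd oo d_lt; have o2 : o = (o./2).*2.+1 by rewrite -[LHS]odd_double_half oo.
set m := (o./2).+1; move: (hd m isT); rewrite /Lm big_ord_recr big1 ?add0r /=; last first.
  by move=> -[i lti] _ /=; rewrite d_lt ?mulr0 // /m; lia.
rewrite (_ : m + m - 1 = o)%N ?subnn ?bin0 ?mulr1; last by rewrite /m; lia.
rewrite add0r => /eqP; rewrite !mulf_eq0 signr_eq0 pnatr_eq0 eqn0Ngt bin_gt0 leq_addr /=.
by move/eqP.
Qed.

Lemma Lcond_limit_closed : limit_closed Lcond.
Proof.
move=> g approx m m_gt0; have [h Lh hg] := approx (2 * m)%N.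
rewrite -[RHS](Lh m m_gt0); apply: eq_bigr => -[i lti] _ /=.
by rewrite hg //; lia.
Qed.

Lemma Lcond_even_spanned : even_spanned (phi k) Lcond.
Proof.
split; [| by move=> e ev m; exact: Lm_phi | exact: Lcond_odd_determined |
          exact: Lcond_limit_closed].
move=> f g c hf hg m m_gt0; transitivity (Lm m f + c * Lm m g).
  by rewrite /Lm mulr_sumr -big_split; apply: eq_bigr => i _ /=; ring.
by rewrite hf // hg // mulr0 addr0.
Qed.

End LinearConditions.

Theorem lemma4p6 (K : numFieldType) (gamma : fps K) (k : nat) (hk : (1 <= k)%N) :
  (forall m : nat, (1 <= m)%N ->
     \sum_(i < m.+1)
        (-1) ^+ i * ('C(2 * m + 2 * k - 1, m - i))%:R * ('C(m + i, i))%:R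
        * gamma (m + i - 1)%N = 0)
  <-> inF (2 * k + 1)%:Z gamma.
Proof.
exact: (even_spanned_eq (phi_lt k) (phi_diag k) (Lcond_even_spanned k) (inF_even_spanned k) gamma).
Qed.
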